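(* Let $P$ be a section of width three. The following are equivalent: (1) $P$ is nice; (2) $P$ contains no retractable point; (3) $P$ contains no irreducible point.
   Context: All posets are finite. Level sets: $P(0)=\min P$, $P(k+1)=\min(P\setminus\bigcup_{i\le k}P(i))$. A section of width three is a poset $P$ of height $h_P\ge1$ with carrier $\{c_{k,j}:k\in[0,h_P],j\in\{0,1,2\}\}$ such that: $c_{0,j}<\dots<c_{h_P,j}$ is a chain for each $j$; each $\{c_{k,0},c_{k,1},c_{k,2}\}$ is an antichain; $c_{k,i}<c_{\ell,j}\Rightarrow c_{k,i+1}<c_{\ell,j+1}$ for all $k,\ell,i,j$ (indices mod 3); and for no $k$ is every point of $P(k)$ below every point of $P(k+1)$. It is nice if for all $x<y$ in $P$: $\{z:z>x\}\not\subseteq\{z:z\ge y\}$ and $\{z:z<y\}\not\subseteq\{z:z\le x\}$. A point $a\in P$ is retractable if $P\setminus\{a\}$ is a retract of $P$ (image of an idempotent order-preserving self-map). A point is irreducible if it has exactly one lower cover or exactly one upper cover. *)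

From mathcomp Require Import all_boot.
Set Implicit Arguments. Unset Strict Implicit. Unset Printing Implicit Defensive.

Section Posets.
Variables (T : finType) (le : rel T).

Definition lt (x y : T) : bool := (x != y) && le x y.

Definition is_partial_order : Prop :=
  [/\ forall x, le x x,
      forall x y, le x y -> le y x -> x = y
    & forall x y z, le x y -> le y z -> le x z].

Definition minimals (S : {set T}) : {set T} :=
  [set x in S | [forall y in S, ~~ lt y x]].

Fixpoint rest (n : nat) : {set T} :=
  match n with
  | 0 => setT
  | n'.+1 => rest n' :\: minimals (rest n')
  end.

(* level sets: P(0) = min P, P(k+1) = min (P \ U_{i<=k} P(i)) *)
Definition level (k : nat) : {set T} := minimals (rest k).

Definition nice : Prop :=
  forall x y, lt x y ->
    (exists z, lt x z /\ ~~ le y z) /\ (exists z, lt z y /\ ~~ le z x).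

(* P \ {a} is a retract of P: image of an idempotent order-preserving map *)
Definition retractable (a : T) : Prop :=
  exists f : T -> T,
    [/\ forall x y, le x y -> le (f x) (f y),
        forall x, f (f x) = f x
      & forall y, (exists x, f x = y) <-> y != a].

Definition covers (y x : T) : bool :=
  lt x y && [forall z, ~~ (lt x z && lt z y)].

Definition lower_covers (x : T) : {set T} := [set y | covers x y].
Definition upper_covers (x : T) : {set T} := [set y | covers y x].

Definition irreducible (a : T) : Prop :=
  #|lower_covers a| = 1 \/ #|upper_covers a| = 1.

End Posets.

(* A section of width three of height h: carrier is the set of pairs
   c_{k,j} = (k, j) with k in [0,h], j in {0,1,2}; the order is [le]. *)
Definition section3 (h : nat) (le : rel ('I_h.+1 * 'I_3)) : Prop :=
  (1 <= h) /\ is_partial_order le /\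
  [/\
      forall (j : 'I_3) (k l : 'I_h.+1), k < l -> lt le (k, j) (l, j),
      forall (k : 'I_h.+1) (i j : 'I_3), i != j -> ~~ le (k, i) (k, j),
      forall (k l : 'I_h.+1) (i j : 'I_3),
        lt le (k, i) (l, j) -> lt le (k, ordS i) (l, ordS j)
    &
      forall k : nat, level le k.+1 != set0 ->
        ~ (forall x y, x \in level le k -> y \in level le k.+1 -> lt le x y)].

From mathcomp Require Import all_boot ssralg zmodp ring zify.
Set Implicit Arguments. Unset Strict Implicit. Unset Printing Implicit Defensive.

(* A point a is retractable exactly when some b <> a lies above everything
   below a and below everything above a (take b = r(a)).  If such a b is
   comparable with a, it is the unique upper or lower cover of a, i.e. a is
   irreducible; and a unique cover b of a is a failure of niceness at the pair
   (a, b).  Conversely a failure of niceness at x < y yields a retraction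
   moving x to y (or y to x).  In a section of width three an incomparable
   such b must lie on the row of a, and the rotational symmetry of the section
   then forces every point of an adjacent row to lie below every point of the
   next row, which the level condition forbids. *)

Section RotationInvariantRelations.
Import GRing.Theory.
Local Open Scope ring_scope.

Lemma ordS_addr1 (x : 'I_3) : ordS x = x + 1.
Proof. by apply/val_inj; rewrite /= modnDmr addn1. Qed.

Variable R : rel 'I_3.
Hypothesis R_ordS : forall p r, R p r -> R (ordS p) (ordS r).

Lemma rotation_invariant_rel_addr (s p r : 'I_3) : R p r -> R (p + s) (r + s).
Proof.
move=> Rpr; rewrite -(natr_Zp s); elim: (nat_of_ord s) => [|n IHn].
  by rewrite !addr0.
by rewrite -!natr1 !addrA -!ordS_addr1; apply/R_ordS/IHn.
Qed.

Lemma rotation_invariant_rel_total (i j : 'I_3) :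
  i != j -> (forall p, R p p) -> (forall p, R p i -> R p j) ->
  forall p r, R p r.
Proof.
move=> i_neq_j R_refl R_ij.
have R_step p r : R p r -> R p (r + (j - i)).
  move/(rotation_invariant_rel_addr (i - r)); have -> : r + (i - r) = i by ring.
  move/R_ij/(rotation_invariant_rel_addr (r - i)).
  have -> : p + (i - r) + (r - i) = p by ring.
  by have -> : j + (r - i) = r + (j - i) by ring.
have d_neq0 : j - i != 0 by rewrite subr_eq0 eq_sym.
have Z3_cover (d p r : 'I_3) : d != 0 -> [|| r == p, r == p + d | r == p + d + d].
  by move: d p r; do 3! case=> [[|[|[|//]]] ?].
move=> p r; case/or3P: (Z3_cover _ p r d_neq0) => /eqP ->.
- exact: R_refl.
- exact/R_step.
- exact/R_step/R_step.
Qed.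

End RotationInvariantRelations.

Section Duality.
Variables (T : finType) (le : rel T).

Definition dual : rel T := fun x y => le y x.

Lemma lt_dual x y : lt dual x y = lt le y x.
Proof. by rewrite /lt eq_sym. Qed.

Lemma dual_partial_order : is_partial_order le -> is_partial_order dual.
Proof.
case=> le_refl le_anti le_trans; split=> // [x y yx xy | x y z yx zy].
  exact: le_anti.
exact: le_trans zy yx.
Qed.

Lemma upper_covers_dual a : upper_covers dual a = lower_covers le a.
Proof.
apply/setP=> c; rewrite !inE /covers lt_dual.
by congr (_ && _); apply: eq_forallb => z; rewrite !lt_dual andbC.
Qed.

Lemma nice_dual : nice le -> nice dual.
Proof.
move=> le_nice x y; rewrite lt_dual.
move=> /le_nice[[z [y_lt_z x_nle_z]] [w [w_lt_x w_nle_y]]].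
by split; [exists w | exists z]; rewrite lt_dual.
Qed.

End Duality.

Section FinitePoset.
Variables (T : finType) (le : rel T).
Hypothesis le_po : is_partial_order le.

Let le_refl x : le x x. Proof. by case: le_po. Qed.
Let le_anti x y : le x y -> le y x -> x = y. Proof. by case: le_po => _ + _; apply. Qed.
Let le_trans y x z : le x y -> le y z -> le x z. Proof. by case: le_po => _ _; apply. Qed.

Lemma ltW x y : lt le x y -> le x y. Proof. by case/andP. Qed.

Lemma lt_irrefl x : lt le x x = false. Proof. by rewrite /lt eqxx. Qed.

Lemma lt_le_trans y x z : lt le x y -> le y z -> lt le x z.
Proof.
move=> /andP[x_neq_y x_le_y] y_le_z; rewrite /lt (le_trans x_le_y y_le_z) andbT.
by apply: contra_neq x_neq_y => x_eq_z; apply: le_anti x_le_y _; rewrite x_eq_z.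
Qed.

Lemma lt_trans y x z : lt le x y -> lt le y z -> lt le x z.
Proof. by move=> x_lt_y /ltW; apply: lt_le_trans. Qed.

(* Among the points of ]a, z], one with the fewest points strictly between a
   and itself covers a. *)
Lemma exists_upper_cover a z : lt le a z -> exists2 c, covers le c a & le c z.
Proof.
move=> a_lt_z; pose gap w := #|[set v | lt le a v && lt le v w]|.
have above_a_below_z : [pred w | lt le a w && le w z] z by rewrite /= a_lt_z le_refl.
have [c /andP[a_lt_c c_le_z] c_min] := arg_minnP gap above_a_below_z.
exists c => //; rewrite /covers a_lt_c; apply/forallP => v.
apply/negP => /andP[a_lt_v v_lt_c].
have := c_min v; rewrite inE a_lt_v (le_trans (ltW v_lt_c) c_le_z) => /(_ isT).
apply/negP; rewrite -ltnNge; apply: proper_card; apply/properP; split.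
  by apply/subsetP => w; rewrite !inE => /andP[-> /lt_trans ->].
by exists v; rewrite !inE ?a_lt_v ?v_lt_c ?lt_irrefl.
Qed.

Lemma upper_covers_eq1 a b :
  upper_covers le a = [set b] <-> lt le a b /\ (forall z, lt le a z -> le b z).
Proof.
split=> [a_covers | [a_lt_b b_least]].
  have : b \in upper_covers le a by rewrite a_covers set11.
  rewrite inE => /andP[a_lt_b _]; split=> // z /exists_upper_cover[c c_covers_a].
  have : c \in upper_covers le a by rewrite inE.
  by rewrite a_covers inE => /eqP->.
apply/setP=> c; rewrite !inE; apply/idP/eqP => [/andP[a_lt_c /forallP c_cov] | ->].
  case: (eqVneq c b) => // c_neq_b.
  have b_lt_c : lt le b c by rewrite /lt eq_sym c_neq_b b_least.
  by have := c_cov b; rewrite a_lt_b b_lt_c.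
rewrite /covers a_lt_b; apply/forallP => z; apply/negP => /andP[a_lt_z z_lt_b].
by have := lt_le_trans z_lt_b (b_least _ a_lt_z); rewrite lt_irrefl.
Qed.

Lemma nice_upper_covers a : nice le -> #|upper_covers le a| != 1.
Proof.
move=> le_nice; apply/negP => /cards1P[b /upper_covers_eq1[a_lt_b b_least]].
by have [[z [a_lt_z]]] := le_nice _ _ a_lt_b; rewrite b_least.
Qed.

Lemma retractableP a : retractable le a <->
  exists b, [/\ b != a, forall x, lt le x a -> le x b & forall y, lt le a y -> le b y].
Proof.
split=> [[f [f_mono f_idem f_img]] | [b [b_neq_a below above]]].
  have f_fix x : x != a -> f x = x by move=> /f_img[t <-]; apply: f_idem.
  exists (f a); split; first by apply/f_img; exists a.
    by move=> x /andP[x_neq_a x_le_a]; rewrite -(f_fix x x_neq_a); apply: f_mono.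
  move=> y /andP[a_neq_y a_le_y]; rewrite -(f_fix y); first exact: f_mono.
  by rewrite eq_sym.
exists (fun t => if t == a then b else t); split.
- move=> s t.
  case: (eqVneq s a) => [-> | s_neq_a]; case: (eqVneq t a) => [-> | t_neq_a].
  + by rewrite le_refl.
  + by move=> a_le_t; apply: above; rewrite /lt eq_sym t_neq_a.
  + by move=> s_le_a; apply: below; rewrite /lt s_neq_a.
  + by [].
- by move=> t; case: (eqVneq t a) => [_ | /negPf ->]; rewrite ?(negPf b_neq_a).
- move=> y; split=> [[t <-] | y_neq_a]; first by case: (eqVneq t a).
  by exists y; rewrite (negPf y_neq_a).
Qed.

Lemma nice_of_not_retractable : (forall a, ~ retractable le a) -> nice le.
Proof.
move=> no_retract x y x_lt_y; have [x_neq_y x_le_y] := andP x_lt_y; split.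
  case: (boolP [exists z, lt le x z && ~~ le y z]) => [|/existsPn above].
    by case/existsP=> z /andP[x_lt_z y_nle_z]; exists z.
  case: (no_retract x); apply/retractableP; exists y; split=> [|z|z].
  - by rewrite eq_sym.
  - by move=> /ltW z_le_x; apply: le_trans z_le_x x_le_y.
  - by move=> x_lt_z; have := above z; rewrite x_lt_z negbK.
case: (boolP [exists z, lt le z y && ~~ le z x]) => [|/existsPn below].
  by case/existsP=> z /andP[z_lt_y z_nle_x]; exists z.
case: (no_retract y); apply/retractableP; exists x; split=> // z.
  by move=> z_lt_y; have := below z; rewrite z_lt_y negbK.
by move=> /ltW y_le_z; apply: le_trans x_le_y y_le_z.
Qed.

End FinitePoset.

Lemma nice_not_irreducible (T : finType) (le : rel T) :
  is_partial_order le -> nice le -> forall a, ~ irreducible le a.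
Proof.
move=> le_po le_nice a [lower1 | upper1].
  have := nice_upper_covers (dual_partial_order le_po) a (nice_dual le_nice).
  by rewrite upper_covers_dual lower1.
by have := nice_upper_covers le_po a le_nice; rewrite upper1.
Qed.

Lemma irreducible_of_comparable_retract (T : finType) (le : rel T) (a b : T) :
  is_partial_order le -> b != a ->
  (forall x, lt le x a -> le x b) -> (forall y, lt le a y -> le b y) ->
  le a b || le b a -> irreducible le a.
Proof.
move=> le_po b_neq_a below above /orP[a_le_b | b_le_a].
  right; apply/eqP/cards1P; exists b; apply/(upper_covers_eq1 le_po).
  by split=> //; rewrite /lt eq_sym b_neq_a.
left; apply/eqP/cards1P; exists b; rewrite -upper_covers_dual.
apply/(upper_covers_eq1 (dual_partial_order le_po)); rewrite lt_dual.
split=> [|z]; first by rewrite /lt b_neq_a.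
by rewrite lt_dual; apply: below.
Qed.

Section WidthThreeSection.
Variables (h : nat) (le : rel ('I_h.+1 * 'I_3)).
Hypothesis le_section : section3 le.

Let le_po : is_partial_order le. Proof. by case: le_section => _ []. Qed.
Let h_gt0 : 0 < h. Proof. by case: le_section. Qed.
Let column_chain (j : 'I_3) (k l : 'I_h.+1) : k < l -> lt le (k, j) (l, j).
Proof. by case: le_section => _ [_ [chain _ _ _]]; apply: chain. Qed.
Let row_antichain (k : 'I_h.+1) (i j : 'I_3) : i != j -> ~~ le (k, i) (k, j).
Proof. by case: le_section => _ [_ [_ antichain _ _]]; apply: antichain. Qed.
Let lt_ordS (k l : 'I_h.+1) (i j : 'I_3) :
  lt le (k, i) (l, j) -> lt le (k, ordS i) (l, ordS j).
Proof. by case: le_section => _ [_ [_ _ rotate _]]; apply: rotate. Qed.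
Let levels_not_stacked (k : nat) : level le k.+1 != set0 ->
  ~ (forall x y, x \in level le k -> y \in level le k.+1 -> lt le x y).
Proof. by case: le_section => _ [_ [_ _ _ stacked]]; apply: stacked. Qed.

Lemma row_not_lt (k : 'I_h.+1) i j : ~~ lt le (k, i) (k, j).
Proof.
case: (eqVneq i j) => [-> | i_neq_j]; first by rewrite lt_irrefl.
by apply: contra (row_antichain k i_neq_j); apply: ltW.
Qed.

Lemma lt_row x y : lt le x y -> x.1 < y.1.
Proof.
case: x y => [k i] [l j] /= x_lt_y; rewrite ltnNge; apply/negP => l_le_k.
case: (ltngtP l k) l_le_k => // [l_lt_k | /val_inj l_eq_k] _.
  have := lt_trans le_po (column_chain i l_lt_k) x_lt_y.
  by rewrite (negPf (row_not_lt _ _ _)).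
by move: x_lt_y; rewrite l_eq_k (negPf (row_not_lt _ _ _)).
Qed.

Lemma minimals_rows_from k :
  minimals le [set x : 'I_h.+1 * 'I_3 | k <= x.1] =
  [set x : 'I_h.+1 * 'I_3 | x.1 == k :> nat].
Proof.
apply/setP => [[l j]]; rewrite !inE /=; case: (ltngtP k l) => [k_lt_l | // | k_eq_l].
- apply/negbTE/forallPn; have k_lt : k < h.+1 by apply: ltn_trans k_lt_l _.
  exists (inord k, j); rewrite inE /= inordK // leqnn negbK.
  by apply: column_chain; rewrite /= inordK.
- apply/forallP => y; apply/implyP; rewrite inE k_eq_l => l_le_y.
  by apply/negP => /lt_row /=; rewrite ltnNge l_le_y.
Qed.

Lemma level_row k : level le k = [set x : 'I_h.+1 * 'I_3 | x.1 == k :> nat].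
Proof.
suff rest_row : rest le k = [set x : 'I_h.+1 * 'I_3 | k <= x.1].
  by rewrite /level rest_row minimals_rows_from.
elim: k => [|k IHk]; first by apply/setP => x; rewrite !inE.
rewrite /= IHk minimals_rows_from; apply/setP => x.
by rewrite !inE ltn_neqAle eq_sym.
Qed.

Lemma adjacent_rows_not_ordered (u v : 'I_h.+1) :
  v = u.+1 :> nat -> ~ (forall p r, lt le (u, p) (v, r)).
Proof.
move=> v_eq rows_lt; apply: (levels_not_stacked (k := u)).
  by apply/set0Pn; exists (v, ord0); rewrite level_row inE /= v_eq.
move=> [x1 x2] [y1 y2]; rewrite !level_row !inE /= => /eqP/val_inj-> /eqP y1_eq.
by have -> : y1 = v by apply/val_inj; rewrite /= y1_eq v_eq.
Qed.

Lemma val_inord_pred (k : 'I_h.+1) : (inord k.-1 : 'I_h.+1) = k.-1 :> nat.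
Proof. by rewrite inordK // (leq_ltn_trans (leq_pred k)). Qed.

Lemma same_row_of_strict_bounds (a b : 'I_h.+1 * 'I_3) :
  (forall x, lt le x a -> lt le x b) -> (forall y, lt le a y -> lt le b y) ->
  a.1 = b.1.
Proof.
case: a => k i below above; apply/val_inj/anti_leq/andP; split=> /=.
  case: (posnP k) => [-> // | k_gt0].
  have u_val := val_inord_pred k.
  have u_lt_k : (inord k.-1 : 'I_h.+1) < k by rewrite u_val; lia.
  by have := lt_row (below _ (column_chain i u_lt_k)); rewrite /= u_val; lia.
have b_le_h := ltn_ord b.1; case: (ltnP k h) => [k_lt_h | ]; last by lia.
have v_val : (inord k.+1 : 'I_h.+1) = k.+1 :> nat by rewrite inordK.
have k_lt_v : k < (inord k.+1 : 'I_h.+1) by rewrite v_val.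
by have := lt_row (above _ (column_chain i k_lt_v)); rewrite /= v_val.
Qed.

Lemma retract_target_comparable (a b : 'I_h.+1 * 'I_3) : b != a ->
  (forall x, lt le x a -> le x b) -> (forall y, lt le a y -> le b y) ->
  le a b || le b a.
Proof.
move=> b_neq_a below above; apply/negPn/negP; rewrite negb_or => /andP[a_nle_b b_nle_a].
have below_lt x : lt le x a -> lt le x b.
  move=> x_lt_a; rewrite /lt below // andbT.
  by apply: contraNneq b_nle_a => <-; apply: ltW.
have above_lt y : lt le a y -> lt le b y.
  move=> a_lt_y; rewrite /lt above // andbT.
  by apply: contraNneq a_nle_b => ->; apply: ltW.
have := same_row_of_strict_bounds below_lt above_lt.
move: b_neq_a below_lt above_lt; clear below above a_nle_b b_nle_a.
case: a b => [k i] [l j] /=; rewrite xpair_eqE => + below_lt above_lt l_eq_k.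
subst l; rewrite eqxx /= => j_neq_i.
case: (posnP k) => [k0 | k_gt0].
  (* a lies on the bottom row: compare rows 0 and 1 through the points above a *)
  have v_val : (inord 1 : 'I_h.+1) = 1 :> nat by rewrite inordK.
  apply: (@adjacent_rows_not_ordered k (inord 1)); first by rewrite v_val k0.
  move=> p r; move: r p; apply: (@rotation_invariant_rel_total _ _ i j).
  - by move=> r p; apply: lt_ordS.
  - by rewrite eq_sym.
  - by move=> p; apply: column_chain; rewrite v_val k0.
  - by move=> r; apply: above_lt.
have u_val := val_inord_pred k.
apply: (@adjacent_rows_not_ordered (inord k.-1) k); first by rewrite u_val; lia.
apply: (@rotation_invariant_rel_total _ _ i j).
- by move=> p r; apply: lt_ordS.
- by rewrite eq_sym.
- by move=> p; apply: column_chain; rewrite u_val; lia.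
- by move=> p; apply: below_lt.
Qed.

Lemma retractable_irreducible a : retractable le a -> irreducible le a.
Proof.
case/(retractableP le_po) => b [b_neq_a below above].
apply: (irreducible_of_comparable_retract le_po b_neq_a below above).
exact: retract_target_comparable.
Qed.

End WidthThreeSection.

Theorem proposition3p3 (h : nat) (le : rel ('I_h.+1 * 'I_3)) :
  section3 le ->
  (nice le <-> (forall a, ~ retractable le a)) /\
  ((forall a, ~ retractable le a) <-> (forall a, ~ irreducible le a)).
Proof.
move=> le_section; have le_po : is_partial_order le by case: le_section => _ [].
have retract_irr := retractable_irreducible le_section.
have nice_irr := nice_not_irreducible le_po.
have retract_nice := nice_of_not_retractable le_po.
split; split.
- by move=> le_nice a /retract_irr; apply: nice_irr.
- exact: retract_nice.
- by move=> no_retract; apply/nice_irr/retract_nice.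
- by move=> no_irr a /retract_irr; apply: no_irr.
Qed.
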